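(* Let $s\in C$ and let $\hat\kappa$ be a prime broadcast center of $T$ under $s$. Then for every $x\in V(T)\setminus\{\hat\kappa\}$, $$b^s(x,T)=d_{x,\hat\kappa}\cdot\rho+\tilde w^s_{x,\hat\kappa}+b^s(\hat\kappa,\bar T_{\hat\kappa,x}).$$
   Context: $T$ is a finite tree with vertex set $V(T)$, $|V(T)|=n$, and edge set $E(T)$. Each edge $(u,v)$ carries an interval $[w^-_{u,v},w^+_{u,v}]$ of non-negative reals. A scenario $s$ assigns to every edge $(u,v)$ a weight $w^s_{u,v}\in[w^-_{u,v},w^+_{u,v}]$; $C$ is the set of all scenarios. A constant $\rho>0$ is fixed. Broadcast time (postal model): for a subtree $G$ of $T$ and $u\in V(G)$, $b^s(u,G)=0$ if $u$ has no neighbour in $G$; otherwise, if $v_1,\dots,v_h$ are the neighbours of $u$ in $G$ and $G_{v}$ is the component of $G-u$ containing $v$, $b^s(u,G)=\min_{\pi}\max_{1\le k\le h}\big(k\rho+w^s_{u,v_{\pi(k)}}+b^s(v_{\pi(k)},G_{v_{\pi(k)}})\big)$ over permutations $\pi$ of $\{1,\dots,h\}$. $B^s=\{u: b^s(u,T)\le b^s(v,T)\ \forall v\in V(T)\}$. For distinct $x,y$, $T_{x,y}$ is the component of $T-x$ containing $y$, and $\bar T_{x,y}$ is the subtree induced by $V(T)\setminus V(T_{x,y})$. A vertex $\hat\kappa\in B^s$ is a prime broadcast center under $s$ if $b^s(\hat\kappa,\bar T_{\hat\kappa,u})\ge b^s(u,\bar T_{u,\hat\kappa})$ for every neighbour $u$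 of $\hat\kappa$. $P_{x,y}$ is the set of edges of the $x$–$y$ path in $T$, $d_{x,y}=|P_{x,y}|$, and $\tilde w^s_{x,y}=\sum_{(u,v)\in P_{x,y}}w^s_{u,v}$. *)

From HB Require Import structures.
From mathcomp Require Import all_boot all_order all_algebra.
Set Implicit Arguments.
Unset Strict Implicit.
Unset Printing Implicit Defensive.
Import Order.TTheory GRing.Theory Num.Theory.
Local Open Scope ring_scope.

Definition is_tree (V : finType) (e : rel V) : Prop :=
  [/\ symmetric e, irreflexive e, (forall x y : V, connect e x y) &
      (forall (x : V) (p : seq V),
          path e x p -> last x p = x -> uniq p -> (size p < 3)%N)].

Definition edge_intervals (V : finType) (R : realFieldType) (e : rel V)
  (wl wu : V -> V -> R) : Prop :=
  (forall u v, wl u v = wl v u) /\ (forall u v, wu u v = wu v u) /\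
  (forall u v, e u v -> 0 <= wl u v <= wu u v).

Definition scenario (V : finType) (R : realFieldType) (e : rel V)
  (wl wu w : V -> V -> R) : Prop :=
  (forall u v, w u v = w v u) /\
  (forall u v, e u v -> wl u v <= w u v <= wu u v).

(* Vertices of the component of G - u containing v, where the subtree G is
   given by its vertex set A (induced subgraph). *)
Definition comp (V : finType) (e : rel V) (A : {set V}) (u v : V) : {set V} :=
  [set y in A :\ u |
     connect [rel a b | [&& e a b, a \in A :\ u & b \in A :\ u]] v y].

(* Broadcast time in the postal model, by recursion with fuel n >= #|A|. *)
Fixpoint bcast_aux (V : finType) (R : realFieldType) (e : rel V) (rho : R)
  (w : V -> V -> R) (n : nat) (u : V) (A : {set V}) {struct n} : R :=
  match n with
  | 0 => 0
  | n'.+1 =>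
    let N := [seq v <- enum A | e u v] in
    let cost (p : seq V) : R :=
      \big[Num.max/0]_(i < size p)
        ((i.+1)%:R * rho + w u (nth u p i)
         + bcast_aux e rho w n' (nth u p i) (comp e A u (nth u p i))) in
    \big[Num.min/cost N]_(p <- permutations N) cost p
  end.

Definition bcast (V : finType) (R : realFieldType) (e : rel V) (rho : R)
  (w : V -> V -> R) (u : V) (A : {set V}) : R :=
  bcast_aux e rho w #|A| u A.

Definition Tsub (V : finType) (e : rel V) (x y : V) : {set V} :=
  comp e [set: V] x y.

Definition Tbar (V : finType) (e : rel V) (x y : V) : {set V} :=
  ~: Tsub e x y.

Definition is_broadcast_center (V : finType) (R : realFieldType) (e : rel V)
  (rho : R) (w : V -> V -> R) (u : V) : Prop :=
  forall v : V, bcast e rho w u [set: V] <= bcast e rho w v [set: V].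

Definition is_prime_broadcast_center (V : finType) (R : realFieldType)
  (e : rel V) (rho : R) (w : V -> V -> R) (k : V) : Prop :=
  is_broadcast_center e rho w k /\
  (forall u : V, e k u ->
     bcast e rho w u (Tbar e u k) <= bcast e rho w k (Tbar e k u)).

Definition simple_path (V : finType) (e : rel V) (x : V) (p : seq V) (y : V)
  : Prop :=
  path e x p /\ last x p = y /\ uniq (x :: p).

Definition path_weight (V : finType) (R : realFieldType) (w : V -> V -> R)
  (x : V) (p : seq V) : R :=
  \sum_(ab <- zip (x :: p) p) w ab.1 ab.2.

(* Let x = x_0, x_1, ..., x_m = kappa be the path.  A vertex u that calls its
   neighbour v first needs at least rho + w(u,v) + b(v, G_v), so b(u, G) is
   bounded below by this quantity for every neighbour v.  If moreover
   b(u, Tbar_{u,v}) <= w(u,v) + b(v, T_{u,v}), the bound is attained as soon as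
   T_{u,v} lies in G: call v first, then follow an optimal schedule of
   Tbar_{u,v}; every later call is delayed by rho and, b being monotone in the
   subtree, each other neighbour broadcasts in a component no larger than in
   Tbar_{u,v}.  This dominance holds at every x_i, because descending one edge
   into a rooted subtree never increases b:
     b(x_i, T_{x_{i+1},x_i}) <= b(u, T_{kappa,u}) <= b(kappa, T_{u,kappa})
                             <= b(x_{i+1}, T_{x_i,x_{i+1}}),
   where u is the neighbour of kappa on the path and the middle inequality is
   the prime-center condition.  Iterating along the path gives the formula. *)

From Pilot Require Import Defs.
From HB Require Import structures.
From mathcomp Require Import all_boot all_order all_algebra.
From mathcomp Require Import zify ring.
Import Order.TTheory GRing.Theory Num.Theory.
Set Implicit Arguments.
Unset Strict Implicit.
Unset Printing Implicit Defensive.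

Lemma nth_filter_ge (T : eqType) (a : pred T) (x0 : T) (s : seq T) i :
  (i < size (filter a s))%N ->
  exists j, [/\ (i <= j)%N, (j < size s)%N & nth x0 s j = nth x0 (filter a s) i].
Proof.
elim: s i => [|y s IH] i //=; case: (a y) => /=.
  case: i => [|i] /= lt_i; first by exists 0%N.
  by have [j [le_ij lt_j eq_j]] := IH i lt_i; exists j.+1.
by move=> lt_i; have [j [le_ij lt_j eq_j]] := IH i lt_i; exists j.+1; rewrite ltnW.
Qed.

Lemma bigmin_seq_attained (d : Order.disp_t) (T : orderType d) (I : eqType)
    (r : seq I) (F : I -> T) i0 :
  i0 \in r -> exists2 i, i \in r & \big[Order.min/F i0]_(j <- r) F j = F i.
Proof.
move=> i0r; suff [->|//] : \big[Order.min/F i0]_(j <- r) F j = F i0 \/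
    exists2 i, i \in r & \big[Order.min/F i0]_(j <- r) F j = F i by exists i0.
elim: r {i0r} => [|a r IH]; first by left; rewrite big_nil.
rewrite big_cons; case: (leP (F a) (\big[Order.min/F i0]_(j <- r) F j)) => _.
  by right; exists a; rewrite ?mem_head.
case: IH => [->|[i ir ->]]; first by left.
by right; exists i; rewrite // inE ir orbT.
Qed.

Section InducedSubgraph.
Variables (V : finType) (e : rel V).

Local Notation comp := (Defs.comp e).

Definition induced (S : {set V}) := [rel a b | [&& e a b, a \in S & b \in S]].

Lemma connect_ind (r : rel V) (P : V -> Prop) v :
  P v -> (forall a b, connect r v a -> P a -> r a b -> P b) ->
  forall y, connect r v y -> P y.
Proof.
move=> Pv Pstep y /connectP [p vp ->].
suff gen a : connect r v a -> P a -> path r a p -> P (last a p).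
  exact: gen (connect0 _ _) Pv vp.
elim: p {vp} a => [|b p IH] a //= va Pa /andP [rab bp].
exact: IH (connect_trans va (connect1 rab)) (Pstep a b va Pa rab) bp.
Qed.

Lemma mem_comp (A : {set V}) u v y :
  (y \in comp A u v) = (y \in A :\ u) && connect (induced (A :\ u)) v y.
Proof. by rewrite inE. Qed.

Lemma induced_connect_subset (S S' : {set V}) a y :
  S \subset S' -> connect (induced S) a y -> connect (induced S') a y.
Proof.
move=> sSS'; apply: connect_sub => x z /and3P [exz xS zS]; apply: connect1.
by rewrite /= exz (subsetP sSS' x xS) (subsetP sSS' z zS).
Qed.

Lemma comp_subset (A B : {set V}) u v :
  A \subset B -> comp A u v \subset comp B u v.
Proof.
move=> sAB; have sAB' : A :\ u \subset B :\ u by apply: setSD.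
apply/subsetP => y; rewrite !mem_comp => /andP [/(subsetP sAB') -> /=].
exact: induced_connect_subset.
Qed.

Lemma comp_subset_comp (A B : {set V}) u v :
  comp A u v \subset B -> comp A u v \subset comp B u v.
Proof.
move=> sCB; apply/subsetP => y yC.
have uy : y != u by move: yC; rewrite mem_comp in_setD1 => /andP [/andP []].
rewrite mem_comp in_setD1 uy (subsetP sCB y yC) /=.
move: yC; rewrite mem_comp => /andP [_].
apply: (connect_ind (P := connect (induced (B :\ u)) v)); first exact: connect0.
move=> a b va vBa /and3P [eab aA bA].
have vb : connect (induced (A :\ u)) v b.
  by apply: connect_trans va (connect1 _); rewrite /= eab aA.
have aC : a \in comp A u v by rewrite mem_comp aA va.
have bC : b \in comp A u v by rewrite mem_comp bA vb.
apply: connect_trans vBa (connect1 _).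
move: aA bA; rewrite /= !in_setD1 eab => /andP [-> _] /andP [-> _].
by rewrite (subsetP sCB a aC) (subsetP sCB b bC).
Qed.

Lemma card_comp_lt (A : {set V}) u v : u \in A -> (#|comp A u v| < #|A|)%N.
Proof.
move=> uA; have sub : comp A u v \subset A :\ u.
  by apply/subsetP => y; rewrite mem_comp => /andP [].
by rewrite (cardsD1 u A) uA add1n ltnS subset_leq_card.
Qed.

Lemma path_inducedW (S : {set V}) a p :
  path (induced S) a p -> path e a p && all [in S] p.
Proof.
elim: p a => [|b p IH] a //= /andP [/and3P [eab _ bS] bp].
by rewrite eab bS; apply: IH.
Qed.

Lemma induced_simple_path (S : {set V}) a y : connect (induced S) a y ->
  exists p, [/\ path e a p, last a p = y, uniq (a :: p) & all [in S] p].
Proof.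
case/connectP => p ap ->; case/shortenP: ap => q aq uq _.
by case/andP: (path_inducedW aq) => eq Sq; exists q.
Qed.

Lemma mem_Tsub a b z :
  (z \in Tsub e a b) = (z != a) && connect (induced (setT :\ a)) b z.
Proof. by rewrite /Tsub mem_comp in_setD1 in_setT andbT. Qed.

Lemma Tsub_closed x y u v : u \in Tsub e x y -> e u v -> v != x -> v \in Tsub e x y.
Proof.
rewrite !mem_Tsub => /andP [ux yu] euv vx; rewrite vx; apply: connect_trans yu (connect1 _).
by rewrite /= euv !in_setD1 ux vx !in_setT.
Qed.

Hypothesis e_sym : symmetric e.

Lemma induced_connect_sym (S : {set V}) x y :
  connect (induced S) x y = connect (induced S) y x.
Proof.
apply: sym_connect_sym => a b /=.
by rewrite e_sym; case: (a \in S); case: (b \in S); rewrite ?andbF ?andbT.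
Qed.

Lemma comp_subset_Tbar (A : {set V}) x v y :
  v != x -> v \notin Tsub e x y -> comp A x v \subset Tbar e x y.
Proof.
move=> vx v_xy; apply/subsetP => z; rewrite mem_comp in_setC => /andP [_ vz].
apply: contra v_xy; rewrite !mem_Tsub vx => /andP [_ yz].
apply: connect_trans yz _; rewrite induced_connect_sym.
exact: induced_connect_subset (setSD _ (subsetT A)) vz.
Qed.

Lemma Tsub_eq x y y' : y' \in Tsub e x y -> Tsub e x y' = Tsub e x y.
Proof.
rewrite mem_Tsub => /andP [_ yy']; apply/setP => z; rewrite !mem_Tsub.
by rewrite (same_connect (induced_connect_sym _) yy').
Qed.

Lemma Tsub_edge_eq k x y : e x y -> x != k -> y != k -> Tsub e k x = Tsub e k y.
Proof.
move=> exy xk yk; apply/esym/Tsub_eq/(Tsub_closed _ exy yk).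
by rewrite mem_Tsub xk connect0.
Qed.

End InducedSubgraph.

Section Tree.
Variables (V : finType) (e : rel V).
Hypothesis e_tree : is_tree e.

Lemma tree_sym : symmetric e. Proof. by case: e_tree. Qed.

Lemma tree_irr : irreflexive e. Proof. by case: e_tree. Qed.

Lemma edge_neq a b : e a b -> a != b.
Proof. by move=> eab; apply: contraTneq eab => ->; rewrite tree_irr. Qed.

(* A common vertex of the two paths yields a shorter instance; without one, the
   paths close up with the edge [a b] into a cycle of length at least 3. *)
Lemma tree_no_detour a b z q1 q2 : e a b ->
  path e a q1 -> last a q1 = z -> uniq (a :: q1) -> b \notin q1 ->
  path e z q2 -> last z q2 = b -> uniq (z :: q2) -> a \notin q2 -> z = a.
Proof.
move=> eab; have [n] := ubnP (size q1 + size q2).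
elim: n z q1 q2 => // n IH z q1 q2 sz p1 l1 u1 nb1 p2 l2 u2 na2.
case: (eqVneq q1 [::]) => [q1_nil|q1_ne]; first by rewrite -l1 q1_nil.
exfalso.
have q2_ne : q2 != [::].
  apply: contra nb1 => /eqP q2_nil; move: l2; rewrite q2_nil /= => zb.
  by case: q1 q1_ne l1 {p1 u1 sz} => // c q1 _ /= l1; rewrite -zb -l1 mem_last.
have [/hasP [w wq2 wq1] | no_common] := boolP (has [in q1] q2).
  have wa : w != a by apply: contraTneq wq1 => ->; case/andP: u1.
  case/splitPr: wq1 sz p1 l1 u1 nb1 => q1a q1b sz p1 l1 u1 nb1.
  case/splitPr: wq2 sz p2 l2 u2 na2 => q2a q2b sz p2 l2 u2 na2.
  move/eqP: wa; apply; apply: (IH w (rcons q1a w) q2b).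
  - by move: sz; rewrite size_rcons !size_cat /=; lia.
  - by move: p1; rewrite cat_path rcons_path => /andP [-> /= /andP [-> _]].
  - by rewrite last_rcons.
  - by move: u1; rewrite -cat_rcons -cat_cons cat_uniq => /andP [].
  - apply: contra nb1; rewrite mem_rcons inE mem_cat inE.
    by case/orP=> [/eqP ->|->]; rewrite ?eqxx ?orbT.
  - by move: p2; rewrite cat_path => /andP [_ /= /andP [_ ->]].
  - by move: l2; rewrite last_cat.
  - by move: u2; rewrite -cat_cons cat_uniq => /and3P [_ _ ->].
  - by apply: contra na2; rewrite mem_cat inE => ->; rewrite !orbT.
have na1 : a \notin q1 by case/andP: u1.
have uq1 : uniq q1 by case/andP: u1.
have uq2 : uniq q2 by case/andP: u2.
case: e_tree => _ _ _ /(_ a (rcons (q1 ++ q2) a)).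
rewrite rcons_path cat_path last_cat p1 l1 p2 l2 tree_sym eab last_rcons.
rewrite rcons_uniq mem_cat negb_or cat_uniq na1 na2 uq1 uq2 no_common.
rewrite size_rcons size_cat => /(_ isT erefl isT).
by case: q1 q1_ne {p1 l1 u1 nb1 sz no_common na1 uq1} => // c q1 _;
   case: q2 q2_ne {p2 l2 u2 na2 uq2} => // d q2 _ /=; rewrite addnS.
Qed.

Lemma Tsub_self a b : e a b -> b \in Tsub e a b.
Proof. by move=> eab; rewrite mem_Tsub eq_sym edge_neq // connect0. Qed.

Lemma Tsub_edge_disjoint a b z : e a b -> z \in Tsub e a b -> z \notin Tsub e b a.
Proof.
move=> eab; rewrite !mem_Tsub => /andP [za bz]; apply/negP => /andP [_ az].
have notin_all S x p : all [in S :\ x] p -> x \notin p.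
  by move/allP=> Sp; apply/negP => /Sp; rewrite /= in_setD1 eqxx.
rewrite (induced_connect_sym tree_sym) in bz.
have [q1 [p1 l1 u1 /notin_all b_q1]] := induced_simple_path az.
have [q2 [p2 l2 u2 /notin_all a_q2]] := induced_simple_path bz.
by move/eqP: za; apply; apply: tree_no_detour eab p1 l1 u1 b_q1 p2 l2 u2 a_q2.
Qed.

Lemma Tsub_edge_cover a b z : e a b -> z \in Tsub e a b :|: Tsub e b a.
Proof.
move=> eab; have eba : e b a by rewrite tree_sym.
case: e_tree => _ _ /(_ a z) + _.
apply: (connect_ind (P := fun z => z \in Tsub e a b :|: Tsub e b a)).
  by rewrite inE Tsub_self ?orbT.
move=> u v _ /setUP [] uT euv; apply/setUP.
  have [->|va] := eqVneq v a; first by right; apply: Tsub_self.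
  by left; apply: Tsub_closed uT euv va.
have [->|vb] := eqVneq v b; first by left; apply: Tsub_self.
by right; apply: Tsub_closed uT euv vb.
Qed.

Lemma Tsub_edgeC a b : e a b -> Tsub e a b = ~: Tsub e b a.
Proof.
move=> eab; apply/setP => z; rewrite in_setC; apply/idP/idP.
  exact: Tsub_edge_disjoint.
by have /setUP [] := Tsub_edge_cover z eab => // ->.
Qed.

Lemma Tbar_edge a b : e a b -> Tbar e a b = Tsub e b a.
Proof. by move=> eab; rewrite /Tbar (Tsub_edgeC eab) setCK. Qed.

Lemma nbr_notin_Tsub x v y : e x v -> e x y -> v != y -> v \notin Tsub e x y.
Proof.
move=> exv exy vy; rewrite (Tsub_edgeC exy) in_setC negbK mem_Tsub vy /=.
apply: connect1; rewrite /= exv !in_setD1 !in_setT vy !andbT.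
by rewrite edge_neq // tree_sym.
Qed.

Lemma Tsub_subset a b c : e a b -> e b c -> a != c -> Tsub e b c \subset Tsub e a b.
Proof.
move=> eab ebc ac; have eba : e b a by rewrite tree_sym.
rewrite (Tsub_edgeC eab); apply/subsetP => z zc; rewrite in_setC.
apply: contra (nbr_notin_Tsub eba ebc ac) => za.
by rewrite -(Tsub_eq tree_sym zc) (Tsub_eq tree_sym za) Tsub_self.
Qed.

Lemma comp_Tsub (A : {set V}) x y :
  Tsub e x y \subset A -> Defs.comp e A x y = Tsub e x y.
Proof.
by move=> sub; apply/eqP; rewrite eqEsubset comp_subset ?subsetT ?comp_subset_comp.
Qed.

End Tree.

Local Open Scope ring_scope.

Section Broadcast.
Variables (R : realFieldType) (V : finType) (e : rel V) (rho : R) (w : V -> V -> R).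
Hypothesis e_irr : irreflexive e.

Local Notation comp := (Defs.comp e).
Local Notation aux := (bcast_aux e rho w).
Local Notation B := (bcast e rho w).

Definition nbrs (A : {set V}) u := [seq v <- enum A | e u v].

(* F stands for the recursive broadcast time, so that the same cost serves for
   the fuelled [bcast_aux] and for [bcast]. *)
Definition call_cost (F : V -> {set V} -> R) (A : {set V}) u (p : seq V) : R :=
  \big[Num.max/0]_(i < size p)
     ((i.+1)%:R * rho + w u (nth u p i) + F (nth u p i) (comp A u (nth u p i))).

Definition min_call_cost F (A : {set V}) u : R :=
  \big[Num.min/call_cost F A u (nbrs A u)]_(p <- permutations (nbrs A u))
     call_cost F A u p.

Lemma bcast_auxS n u (A : {set V}) : aux n.+1 u A = min_call_cost (aux n) A u.
Proof. by []. Qed.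

Lemma mem_nbrs (A : {set V}) u v : (v \in nbrs A u) = (v \in A) && e u v.
Proof. by rewrite mem_filter mem_enum andbC. Qed.

Lemma nbrs_uniq (A : {set V}) u : uniq (nbrs A u).
Proof. exact/filter_uniq/enum_uniq. Qed.

Lemma mem_comp_nbr (A : {set V}) u v : v \in nbrs A u -> v \in comp A u v.
Proof.
rewrite mem_nbrs mem_comp in_setD1 connect0 => /andP [-> euv].
by rewrite !andbT; apply: contraTneq euv => ->; rewrite e_irr.
Qed.

Lemma eq_min_call_cost F G (A : {set V}) u :
  {in nbrs A u, forall v, F v (comp A u v) = G v (comp A u v)} ->
  min_call_cost F A u = min_call_cost G A u.
Proof.
move=> FG; have FG_cost p : perm_eq p (nbrs A u) -> call_cost F A u p = call_cost G A u p.
  by move=> pA; apply: eq_bigr => i _; rewrite FG // -(perm_mem pA) mem_nth.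
rewrite /min_call_cost FG_cost //; apply: eq_big_seq => p.
by rewrite mem_permutations; apply: FG_cost.
Qed.

Lemma bcast_aux_fuel n m u (A : {set V}) : u \in A ->
  (#|A| <= n)%N -> (#|A| <= m)%N -> aux n u A = aux m u A.
Proof.
elim: n m u A => [|n IH] [|m] u A uA le_An le_Am;
  have A_gt0 : (0 < #|A|)%N by [apply/card_gt0P; exists u]; try lia.
rewrite !bcast_auxS; apply: eq_min_call_cost => v vA.
have lt_CA := card_comp_lt e v uA.
by apply: IH; [exact: mem_comp_nbr | lia | lia].
Qed.

Lemma bcastE u (A : {set V}) : u \in A -> B u A = min_call_cost B A u.
Proof.
move=> uA; have A_gt0 : (0 < #|A|)%N by apply/card_gt0P; exists u.
have lt_comp v := card_comp_lt e v uA.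
rewrite {1}/bcast; case: #|A| A_gt0 lt_comp => // n _ lt_comp.
rewrite bcast_auxS; apply: eq_min_call_cost => v vA.
by apply: bcast_aux_fuel; [exact: mem_comp_nbr | have := lt_comp v; lia | ].
Qed.

Lemma bcast_le_cost u (A : {set V}) p :
  u \in A -> perm_eq p (nbrs A u) -> B u A <= call_cost B A u p.
Proof.
by move=> uA pA; rewrite bcastE //; apply: ge_bigmin_seq; rewrite ?mem_permutations.
Qed.

Lemma bcast_optimal u (A : {set V}) : u \in A ->
  exists2 p, perm_eq p (nbrs A u) & B u A = call_cost B A u p.
Proof.
move=> uA; rewrite bcastE //.
have nbrs_perm : nbrs A u \in permutations (nbrs A u) by rewrite mem_permutations.
have [p] := bigmin_seq_attained (call_cost B A u) nbrs_perm.
by rewrite mem_permutations; exists p.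
Qed.

Lemma call_cost_ge F (A : {set V}) u p i : (i < size p)%N ->
  (i.+1)%:R * rho + w u (nth u p i) + F (nth u p i) (comp A u (nth u p i))
    <= call_cost F A u p.
Proof. by move=> lt_ip; apply: (le_bigmax _ _ (Ordinal lt_ip)). Qed.

Hypothesis rho_ge0 : 0 <= rho.

Lemma bcast_ge_nbr u v (A : {set V}) : u \in A -> v \in A -> e u v ->
  rho + w u v + B v (comp A u v) <= B u A.
Proof.
move=> uA vA euv; rewrite [B u A]bcastE //.
have cost_ge p : perm_eq p (nbrs A u) -> rho + w u v + B v (comp A u v) <= call_cost B A u p.
  move=> pA; have vp : v \in p by rewrite (perm_mem pA) mem_nbrs vA euv.
  have lt_vp : (index v p < size p)%N by rewrite index_mem.
  apply: le_trans (call_cost_ge B A u lt_vp); rewrite nth_index //.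
  by rewrite !lerD2r -{1}(mul1r rho) ler_wpM2r // ler1n.
rewrite /min_call_cost big_seq; apply: le_bigmin => [|p]; first exact: cost_ge.
by rewrite mem_permutations; apply: cost_ge.
Qed.

Lemma call_cost_filter_le F G (A B : {set V}) u (a : pred V) p :
  {in filter a p, forall v, F v (comp A u v) <= G v (comp B u v)} ->
  call_cost F A u (filter a p) <= call_cost G B u p.
Proof.
move=> FG; apply: bigmax_le => [|i _]; first exact: bigmax_ge_id.
have [j [le_ij lt_j nth_j]] := nth_filter_ge u (ltn_ord i).
rewrite -nth_j; apply: le_trans (call_cost_ge G B u lt_j).
apply: lerD; first by rewrite lerD2r ler_wpM2r // ler_nat ltnS.
by apply: FG; rewrite nth_j mem_nth.
Qed.

Lemma call_cost_cons_le F (A : {set V}) u y q :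
  call_cost F A u (y :: q) <=
    Num.max (rho + w u y + F y (comp A u y)) (rho + call_cost F A u q).
Proof.
rewrite /call_cost big_ord_recl /= mul1r ge_max le_max lexx le_max /=.
apply/orP; right; apply: bigmax_le => [|i _]; first by rewrite addr_ge0 ?bigmax_ge_id.
rewrite /bump /= !add0n add1n -natr1 mulrDl mul1r [_ + rho]addrC -!addrA lerD2l !addrA.
exact: (call_cost_ge F A u (ltn_ord i)).
Qed.

Lemma subset_le_bcast (A A' : {set V}) u : u \in A' -> A' \subset A -> B u A' <= B u A.
Proof.
have [k] := ubnP #|A|; elim: k A A' u => // k IH A A' u lt_Ak uA' sA'A.
have uA := subsetP sA'A u uA'.
have [P PA ->] := bcast_optimal uA.
have PA' : perm_eq [seq v <- P | v \in nbrs A' u] (nbrs A' u).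
  apply: uniq_perm; [by rewrite filter_uniq // (perm_uniq PA) nbrs_uniq | exact: nbrs_uniq |].
  move=> y; rewrite mem_filter andb_idr // (perm_mem PA) !mem_nbrs.
  by case/andP=> /(subsetP sA'A) -> ->.
apply: le_trans (bcast_le_cost uA' PA') (call_cost_filter_le _) => v.
rewrite mem_filter => /andP [vA' _]; apply: IH (mem_comp_nbr vA') (comp_subset _ _ _ sA'A).
by have := card_comp_lt e v uA; lia.
Qed.

End Broadcast.

Section TreeBroadcast.
Variables (R : realFieldType) (V : finType) (e : rel V) (rho : R) (w : V -> V -> R).
Hypotheses (e_tree : is_tree e) (rho_ge0 : 0 <= rho).
Hypothesis w_ge0 : forall u v, e u v -> 0 <= w u v.

Let e_irr : irreflexive e := tree_irr e_tree.

Local Notation B := (bcast e rho w).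

Lemma bcast_Tsub_descend a b c : e a b -> e b c -> a != c ->
  B c (Tsub e b c) <= B b (Tsub e a b).
Proof.
move=> eab ebc ac; have sTT := Tsub_subset e_tree eab ebc ac.
have bT := Tsub_self e_tree eab; have cT := subsetP sTT c (Tsub_self e_tree ebc).
apply: le_trans (bcast_ge_nbr w e_irr rho_ge0 bT cT ebc); rewrite comp_Tsub //.
by rewrite lerDr addr_ge0 ?w_ge0.
Qed.

Lemma bcast_Tsub_path a b q k : path e a (b :: q) -> last b q = k -> uniq (a :: b :: q) ->
  exists u, [/\ e u k, B a (Tsub e b a) <= B u (Tsub e k u)
                     & B k (Tsub e u k) <= B b (Tsub e a b)].
Proof.
elim: q a b => [|c q IH] a b /=; first by move=> /andP [eab _] <- _; exists a.
move=> /andP [eab bcq] lk /andP [abcq bcq_uniq].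
have ac : a != c by apply: contraNneq abcq => ->; rewrite !inE eqxx orbT.
have [u [euk le_a le_k]] := IH b c bcq lk bcq_uniq.
have ebc : e b c by case/andP: bcq.
have ecb : e c b by rewrite (tree_sym e_tree).
have eba : e b a by rewrite (tree_sym e_tree).
exists u; split=> //; first by apply: le_trans le_a; rewrite bcast_Tsub_descend // eq_sym.
exact: le_trans le_k (bcast_Tsub_descend eab ebc ac).
Qed.

Lemma prime_center_Tsub k u : is_prime_broadcast_center e rho w k -> e u k ->
  B u (Tsub e k u) <= B k (Tsub e u k).
Proof.
move=> [_ k_prime] euk; have eku : e k u by rewrite (tree_sym e_tree).
by have := k_prime u eku; rewrite (Tbar_edge e_tree euk) (Tbar_edge e_tree eku).
Qed.

Lemma bcast_Tbar_le_prime k a b q : is_prime_broadcast_center e rho w k ->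
  path e a (b :: q) -> last b q = k -> uniq (a :: b :: q) ->
  B a (Tbar e a b) <= w a b + B b (Tsub e a b).
Proof.
move=> k_prime abq lk abq_uniq; have eab : e a b by case/andP: abq.
have [u [euk le_a le_k]] := bcast_Tsub_path abq lk abq_uniq.
rewrite (Tbar_edge e_tree eab); apply: le_trans le_a _.
apply: le_trans (prime_center_Tsub k_prime euk) _; apply: le_trans le_k _.
by rewrite lerDr w_ge0.
Qed.

Lemma nbrs_Tbar_cons (A : {set V}) x y P : e x y -> y \in A ->
  perm_eq P (nbrs e (Tbar e x y) x) -> perm_eq (y :: [seq v <- P | v \in A]) (nbrs e A x).
Proof.
move=> exy yA PTb; apply: uniq_perm; last 1 first.
- move=> v; rewrite inE mem_filter !mem_nbrs.
  have [->|vy] := eqVneq v y; first by rewrite yA exy.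
  rewrite (perm_mem PTb) mem_nbrs in_setC /=.
  have [exv|] := boolP (e x v); last by rewrite !andbF.
  by rewrite (nbr_notin_Tsub e_tree exv exy vy) !andbT.
- have y_P : y \notin P by rewrite (perm_mem PTb) mem_nbrs in_setC Tsub_self.
  by rewrite /= mem_filter negb_and y_P orbT filter_uniq // (perm_uniq PTb) nbrs_uniq.
- exact: nbrs_uniq.
Qed.

Lemma bcast_call_first (A : {set V}) x y : x \in A -> e x y -> Tsub e x y \subset A ->
  B x (Tbar e x y) <= w x y + B y (Tsub e x y) ->
  B x A = rho + w x y + B y (Tsub e x y).
Proof.
move=> xA exy sTA dom; have compA := comp_Tsub sTA.
have yA := subsetP sTA y (Tsub_self e_tree exy).
apply/eqP; rewrite eq_le -{2}compA bcast_ge_nbr // andbT.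
have xTb : x \in Tbar e x y by rewrite in_setC mem_Tsub eqxx.
have [P PTb costP] := bcast_optimal rho w e_irr xTb.
have yP_nbrs := nbrs_Tbar_cons exy yA PTb.
apply: le_trans (bcast_le_cost rho w e_irr xA yP_nbrs) _.
apply: le_trans (call_cost_cons_le e w rho_ge0 _ _ _ _ _) _.
rewrite compA ge_max lexx -addrA lerD2l /=; apply: le_trans dom; rewrite costP.
apply: call_cost_filter_le => // v; rewrite mem_filter => /andP [vA vP].
have exv : e x v by move: vP; rewrite (perm_mem PTb) mem_nbrs => /andP [].
have vTb : v \in Tbar e x y by move: vP; rewrite (perm_mem PTb) mem_nbrs => /andP [].
apply: subset_le_bcast => //; first by rewrite mem_comp_nbr // mem_nbrs vA exv.
apply/comp_subset_comp/comp_subset_Tbar; first exact: tree_sym.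
  by rewrite eq_sym (edge_neq e_tree).
by rewrite -in_setC.
Qed.

Lemma bcast_along_path k p : is_prime_broadcast_center e rho w k ->
  forall x (A : {set V}), path e x p -> last x p = k -> uniq (x :: p) -> x != k ->
  x \in A -> Tsub e x (head k p) \subset A ->
  B x A = (size p)%:R * rho + path_weight w x p + B k (Tbar e k x).
Proof.
move=> k_prime; elim: p => [|y p IH] x A /=; first by move=> _ -> _; rewrite eqxx.
move=> /andP [exy yp] lk xyp_uniq xk xA sTA.
rewrite (bcast_call_first xA exy sTA); last first.
  by apply: bcast_Tbar_le_prime k_prime _ lk xyp_uniq; rewrite /= exy.
case: p IH yp lk xyp_uniq {sTA} => [|z p] IH yp lk xyp_uniq.
  rewrite /= in lk; rewrite -lk /Tbar -(Tsub_edgeC e_tree exy).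
  by rewrite /path_weight big_cons big_nil mul1r addr0.
have eyz : e y z by case/andP: yp.
have yzp_uniq : uniq (y :: z :: p) by case/andP: xyp_uniq.
have xz : x != z by apply: contraTneq xyp_uniq => ->; rewrite /= !inE eqxx !orbT.
have yk : y != k.
  by apply/eqP => yk; move: yzp_uniq; rewrite /= yk -lk /= mem_last.
rewrite (IH y _ yp lk yzp_uniq yk (Tsub_self e_tree exy) (Tsub_subset e_tree exy eyz xz)).
rewrite /Tbar (Tsub_edge_eq (tree_sym e_tree) exy xk yk) /path_weight /= !big_cons /=.
rewrite -!natr1 !mulrDl !mul1r; ring.
Qed.

End TreeBroadcast.

Theorem lemma4 (R : realFieldType) (V : finType) (e : rel V) (rho : R)
  (wl wu w : V -> V -> R) (kappa : V) :
  is_tree e -> 0 < rho -> edge_intervals e wl wu -> scenario e wl wu w ->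
  is_prime_broadcast_center e rho w kappa ->
  forall (x : V) (p : seq V), x != kappa -> simple_path e x p kappa ->
  bcast e rho w x [set: V] =
    (size p)%:R * rho + path_weight w x p + bcast e rho w kappa (Tbar e kappa x).
Proof.
move=> e_tree rho_gt0 [_ [_ wlu]] [_ w_in] k_prime x p xk [xp [lk xp_uniq]].
have w_ge0 u v : e u v -> 0 <= w u v.
  move=> euv; case/andP: (wlu u v euv) => wl_ge0 _.
  by case/andP: (w_in u v euv) => /(le_trans wl_ge0).
exact: (bcast_along_path e_tree (ltW rho_gt0) w_ge0 k_prime xp lk xp_uniq xk
          (in_setT x) (subsetT _)).
Qed.
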